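(* For $n\geq 1$, let $E_n(p,q)=\sum_{\sigma\in\mathcal{Q}_n}p^{\operatorname{odd}(\sigma)}q^{\operatorname{even}(\sigma)}$. Then \[ E_n(p,q)=\sum_{k=0}^n {n\brack k}\,p^k(p+q)^{n-k}. \] In particular, for $n\geq 2$: $E_n(1,1)=(2n-1)!!$, $E_n(p,0)=n!\,p^n$, $E_n(1,-1)=1$ and $E_n(-1,1)=(-1)^n$.
   Context: Let $[n]_2$ be the multiset $\{1,1,2,2,\dots,n,n\}$. A Stirling permutation of order $n$ is a permutation $\sigma=\sigma_1\cdots\sigma_{2n}$ of $[n]_2$ such that for each $i\in[n]$ every entry between the two occurrences of $i$ is greater than $i$; $\mathcal{Q}_n$ is the set of these. A value $k\in[n]$ is an even (resp. odd) indexed entry of $\sigma$ if the first occurrence of $k$ in $\sigma$ is at an even (resp. odd) position; $\operatorname{even}(\sigma)$ and $\operatorname{odd}(\sigma)$ are the numbers of even and odd indexed entries (so $\operatorname{even}(\sigma)+\operatorname{odd}(\sigma)=n$). ${n\brack k}$ denotes the signless Stirling number of the first kind, the number of permutations of $[n]$ with exactly $k$ cycles. *)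

From HB Require Import structures.
From mathcomp Require Import all_boot all_order all_algebra all_fingroup.
Set Implicit Arguments. Unset Strict Implicit. Unset Printing Implicit Defensive.
Import GRing.Theory.

Definition multiset2 (n : nat) : seq nat := flatten [seq [:: i; i] | i <- iota 1 n].

(* Stirling condition: for each value i, every entry strictly between the two
   occurrences of i is greater than i. *)
Definition stirling_cond (s : seq nat) : bool :=
  all (fun a => all (fun b => all (fun c =>
     (a < b < c) && (nth 0 s a == nth 0 s c) ==> (nth 0 s a < nth 0 s b))
   (iota 0 (size s))) (iota 0 (size s))) (iota 0 (size s)).

(* Q_n : the list of Stirling permutations of order n.
   [permutations] lists every permutation of the multiset exactly once. *)
Definition stirling_perms (n : nat) : seq (seq nat) :=
  [seq s <- permutations (multiset2 n) | stirling_cond s].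

(* 1-based position of the first occurrence of k in s. *)
Definition first_pos (k : nat) (s : seq nat) : nat := (index k s).+1.

Definition even_ix (n : nat) (s : seq nat) : nat :=
  count (fun k => ~~ odd (first_pos k s)) (iota 1 n).
Definition odd_ix (n : nat) (s : seq nat) : nat :=
  count (fun k => odd (first_pos k s)) (iota 1 n).

Definition E (R : comNzRingType) (n : nat) (p q : R) : R :=
  \sum_(s <- stirling_perms n) p ^+ odd_ix n s * q ^+ even_ix n s.

(* signless Stirling number of the first kind: number of permutations of
   [n] (here 'I_n) with exactly k cycles (fixed points count as cycles). *)
Definition stirling1 (n k : nat) : nat :=
  #|[set s : 'S_n | #|porbits s| == k]|.

Definition odd_dfact (n : nat) : nat := \prod_(i < n) (2 * i + 1).

From mathcomp Require Import all_boot all_order all_algebra all_fingroup.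
From mathcomp Require Import zify ring.
Import GRing.Theory.
Set Implicit Arguments. Unset Strict Implicit. Unset Printing Implicit Defensive.

(* The two copies of the largest entry of a Stirling permutation are adjacent,
   so every Stirling permutation of order n+1 arises in exactly one way by
   inserting the pair (n+1)(n+1) into one of the 2n+1 gaps of a Stirling
   permutation of order n.  Inserting into gap A moves the other first
   occurrences by 0 or 2 places and makes n+1 odd indexed iff A is even, whence
   E_(n+1) = E_n (p + n(p+q)) and E_n = prod_(i<n) (p + i(p+q)).  The cycle
   generating function of S_n obeys the same recurrence: a permutation of
   {0,...,n} is uniquely (j 0) composed with a permutation of {1,...,n}, and it
   has one more cycle than the latter iff j = 0.  The special values are
   evaluations of the product. *)

Lemma stirling_condP (s : seq nat) :
  reflect (forall a b c, a < b -> b < c -> c < size s ->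
             nth 0 s a = nth 0 s c -> nth 0 s a < nth 0 s b)
          (stirling_cond s).
Proof.
apply: (iffP idP) => [/allP st a b c ab bc cs eac | st].
- have in_range i : i <= c -> i \in iota 0 (size s) by rewrite mem_iota; lia.
  have ac : a <= c by rewrite ltnW // (ltn_trans ab).
  have /allP/(_ b (in_range b (ltnW bc)))/allP := st a (in_range a ac).
  by move=> /(_ c (in_range c (leqnn c)))/implyP; apply; rewrite ab bc eac eqxx.
- apply/allP => a _; apply/allP => b _; apply/allP => c; rewrite mem_iota => cs.
  apply/implyP => /andP[/andP[ab bc] /eqP eac].
  by apply: st eac => //; case/andP: cs.
Qed.

Lemma nth_cat_addn (T : Type) (x0 : T) (s1 s2 : seq T) i :
  nth x0 (s1 ++ s2) (size s1 + i) = nth x0 s2 i.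
Proof. by rewrite nth_cat ltnNge leq_addr addKn. Qed.

Section InsertPair.
Variables (a b : seq nat) (m : nat).

Let s := a ++ m :: m :: b.
Let t := a ++ b.
Let skip_pair i := if i < size a then i else i.+2.

Lemma nth_skip_pair i : nth 0 s (skip_pair i) = nth 0 t i.
Proof.
rewrite /skip_pair /s /t; case: ltnP => ai; first by rewrite !nth_cat ai.
by rewrite -(subnKC ai) -!addnS !nth_cat_addn.
Qed.

Lemma skip_pair_mono i j : (skip_pair i < skip_pair j) = (i < j).
Proof. by rewrite /skip_pair; case: (ltnP i (size a)); case: (ltnP j (size a)); lia. Qed.

Lemma nth_pair_fst : nth 0 s (size a) = m.
Proof. by rewrite -[size a]addn0 nth_cat_addn. Qed.

Lemma nth_pair_snd : nth 0 s (size a).+1 = m.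
Proof. by rewrite -addn1 nth_cat_addn. Qed.

Lemma size_insert_pair : size s = (size t).+2.
Proof. by rewrite /s /t !size_cat /= !addnS. Qed.

Lemma insert_pair_position i : i < size s ->
  [\/ i = size a, i = (size a).+1 | exists2 j, j < size t & i = skip_pair j].
Proof.
rewrite size_insert_pair /skip_pair /t size_cat => lt_i.
case: (ltngtP i (size a)) => [lt_ia|gt_ia|->]; last exact: Or31.
- by apply: Or33; exists i; [lia | rewrite lt_ia].
- case: (eqVneq i (size a).+1) => [->|ne]; first exact: Or32.
  by apply: Or33; exists (i - 2); [lia | rewrite ifN; lia].
Qed.

Lemma odd_index_insert_pair k : k != m -> odd (index k s) = odd (index k t).
Proof.
move=> km; rewrite /s /t !index_cat; case: ifP => // _.
by rewrite /= eq_sym (negbTE km) !addnS /= negbK.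
Qed.

Hypothesis lt_m : {in a ++ b, forall x, x < m}.

Lemma nth_lt_m j : j < size t -> nth 0 t j < m.
Proof. by move=> jt; apply: lt_m; rewrite mem_nth. Qed.

Lemma stirling_cond_insert_pair : stirling_cond s = stirling_cond t.
Proof.
apply/stirling_condP/stirling_condP => st.
- move=> i j k ij jk kt eik; rewrite -!nth_skip_pair.
  apply: (st (skip_pair i) (skip_pair j) (skip_pair k));
    rewrite ?skip_pair_mono ?nth_skip_pair //.
  by rewrite size_insert_pair /skip_pair; case: ifP; lia.
- move=> i j k ij jk ks; have lt_j_s : j < size s := ltn_trans jk ks.
  have neq_m j' : j' < size t -> (nth 0 t j' == m) = false.
    by move/nth_lt_m; rewrite ltn_neqAle => /andP[/negbTE].
  have lt_i_s : i < size s := ltn_trans ij lt_j_s.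
  move: ij jk; have [-> | -> | [i' i't ->]] := insert_pair_position lt_i_s;
  have [-> | -> | [k' k't ->]] := insert_pair_position ks;
    rewrite ?nth_pair_fst ?nth_pair_snd ?nth_skip_pair => ij jk /eqP;
    rewrite 1?(eq_sym m) ?neq_m //; try lia.
  move=> /eqP eq_ik; move: ij jk.
  have [-> | -> | [j' j't ->]] := insert_pair_position lt_j_s;
    rewrite ?nth_pair_fst ?nth_pair_snd ?nth_skip_pair ?nth_lt_m //.
  rewrite !skip_pair_mono => ij jk.
  by apply: (st i' j' k'); rewrite // -size_insert_pair.
Qed.

End InsertPair.

Lemma perm_insert_pair (T : eqType) (a b : seq T) m :
  perm_eql (a ++ m :: m :: b) ((a ++ b) ++ [:: m; m]).
Proof. by apply/permPl; rewrite -catA perm_cat2l (perm_catC [:: m; m]). Qed.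

Lemma notin_take_index (T : eqType) (x : T) s : x \notin take (index x s) s.
Proof. by apply/negP => /index_ltn; rewrite ltnn. Qed.

Lemma stirling_cond_max_pair (s : seq nat) m :
  stirling_cond s -> {in s, forall x, x <= m} -> count_mem m s = 2 ->
  exists a b, s = a ++ m :: m :: b.
Proof.
move=> /stirling_condP st le_m cnt_m.
have m_s : m \in s by rewrite -has_pred1 has_count cnt_m.
have {m_s} [a ma [r es]] : exists2 a, m \notin a & exists r, s = a ++ m :: r.
  exists (take (index m s) s); first exact: notin_take_index.
  exists (drop (index m s).+1 s).
  by rewrite -{1}(cat_take_drop (index m s) s) (drop_nth m) ?index_mem ?nth_index.
subst s; have cnt_r : count_mem m r = 1.
  by move: cnt_m; rewrite count_cat (count_memPn ma) /= eqxx; case.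
case: r st le_m {cnt_m} cnt_r => [|y b] //= st le_m cnt_r.
case: (eqVneq y m) => [-> | ym]; first by exists a, b.
have m_b : m \in b.
  by rewrite -has_pred1 has_count; move: cnt_r; rewrite (negbTE ym) add0n => ->.
case/splitPr: m_b st le_m => c d st le_m.
have y_le_m : y <= m by apply: le_m; rewrite mem_cat !inE eqxx /= !orbT.
suff : m < y by rewrite ltnNge y_le_m.
have := st (size a + 0) (size a + 1) (size a + (size c).+2).
rewrite !nth_cat_addn /= nth_cat ltnn subnn !size_cat /= size_cat /=.
by apply=> //; lia.
Qed.

Lemma multiset2S n : multiset2 n.+1 = multiset2 n ++ [:: n.+1; n.+1].
Proof. by rewrite /multiset2 -[n.+1]addn1 iotaD map_cat flatten_cat /= addn1. Qed.

Lemma size_multiset2 n : size (multiset2 n) = n.*2.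
Proof. by elim: n => // n IHn; rewrite multiset2S size_cat IHn addn2 doubleS. Qed.

Lemma mem_multiset2 n x : (x \in multiset2 n) = (0 < x <= n).
Proof.
elim: n => [|n IHn]; first by rewrite /multiset2 /= in_nil; case: x.
rewrite multiset2S mem_cat IHn !inE orbb; lia.
Qed.

Lemma mem_stirling_perms n s :
  (s \in stirling_perms n) = perm_eq s (multiset2 n) && stirling_cond s.
Proof. by rewrite mem_filter mem_permutations andbC. Qed.

Lemma stirling_perms_uniq n : uniq (stirling_perms n).
Proof. exact/filter_uniq/permutations_uniq. Qed.

Lemma stirling_perm_range n s x :
  s \in stirling_perms n -> x \in s -> 0 < x <= n.
Proof. by rewrite mem_stirling_perms => /andP[/perm_mem-> _]; rewrite mem_multiset2. Qed.

Lemma stirling_perm_size n s : s \in stirling_perms n -> size s = n.*2.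
Proof. by rewrite mem_stirling_perms => /andP[/perm_size-> _]; rewrite size_multiset2. Qed.

Lemma stirling_perm_notin n s : s \in stirling_perms n -> n.+1 \notin s.
Proof. by move=> sQ; apply/negP => /(stirling_perm_range sQ); rewrite ltnn andbF. Qed.

Lemma mem_stirling_perms_insert_pair n a b :
  (a ++ n.+1 :: n.+1 :: b \in stirling_perms n.+1) = (a ++ b \in stirling_perms n).
Proof.
rewrite !mem_stirling_perms multiset2S perm_insert_pair perm_cat2r.
have [ab_perm /=|//] := boolP (perm_eq _ _).
apply: stirling_cond_insert_pair => x.
by rewrite (perm_mem ab_perm) mem_multiset2 => /andP[].
Qed.

Definition insert_pair n (t : seq nat) A := take A t ++ n.+1 :: n.+1 :: drop A t.

Lemma insert_pair_stirling n t A :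
  t \in stirling_perms n -> insert_pair n t A \in stirling_perms n.+1.
Proof. by rewrite mem_stirling_perms_insert_pair cat_take_drop. Qed.

Lemma stirling_perm_insert_pair n s : s \in stirling_perms n.+1 ->
  exists2 t, t \in stirling_perms n & exists2 A, A <= n.*2 & s = insert_pair n t A.
Proof.
move=> sQ; move: (sQ); rewrite mem_stirling_perms => /andP[s_perm st].
have cnt : count_mem n.+1 s = 2.
  rewrite (seq.permP s_perm) multiset2S count_cat /= eqxx.
  by rewrite (count_memPn _) // mem_multiset2 ltnn andbF.
have le_n1 : {in s, forall x, x <= n.+1} by move=> x /(stirling_perm_range sQ)/andP[].
have [a [b es]] := stirling_cond_max_pair st le_n1 cnt.
move: sQ; rewrite es mem_stirling_perms_insert_pair => tQ.
exists (a ++ b) => //; exists (size a).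
  by rewrite -(stirling_perm_size tQ) size_cat leq_addr.
by rewrite /insert_pair take_size_cat // drop_size_cat.
Qed.

Lemma filter_insert_pair n t A :
  n.+1 \notin t -> filter (predC1 n.+1) (insert_pair n t A) = t.
Proof.
move=> nt; rewrite filter_cat /= eqxx /= -filter_cat cat_take_drop.
by apply/all_filterP/allP => x xt /=; apply: contraNneq nt => <-.
Qed.

Lemma index_insert_pair n t A :
  n.+1 \notin t -> A <= size t -> index n.+1 (insert_pair n t A) = A.
Proof.
move=> nt At; rewrite index_pivot ?size_takel //.
by apply: contra nt => /mem_take.
Qed.

Lemma insert_pair_inj n t1 t2 A1 A2 :
  n.+1 \notin t1 -> n.+1 \notin t2 -> A1 <= size t1 -> A2 <= size t2 ->
  insert_pair n t1 A1 = insert_pair n t2 A2 -> t1 = t2 /\ A1 = A2.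
Proof.
move=> nt1 nt2 At1 At2 e; split.
- by rewrite -(filter_insert_pair A1 nt1) e filter_insert_pair.
- by rewrite -(index_insert_pair nt1 At1) e index_insert_pair.
Qed.

Lemma perm_stirling_perms_insert_pair n :
  perm_eq (stirling_perms n.+1)
    [seq insert_pair n t A | t <- stirling_perms n, A <- iota 0 (n.*2).+1].
Proof.
have A_le t A : t \in stirling_perms n -> A \in iota 0 (n.*2).+1 -> A <= size t.
  by move=> tQ; rewrite mem_iota (stirling_perm_size tQ) ltnS.
apply: uniq_perm; first exact: stirling_perms_uniq.
- apply: allpairs_uniq; rewrite ?stirling_perms_uniq ?iota_uniq //.
  move=> x y /allpairsP[[t1 A1] [t1Q A1i ->]] /allpairsP[[t2 A2] [t2Q A2i ->]] /= e.
  have [] := insert_pair_inj (stirling_perm_notin t1Q) (stirling_perm_notin t2Q)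
               (A_le _ _ t1Q A1i) (A_le _ _ t2Q A2i) e.
  by move=> /= -> ->.
- move=> s; apply/idP/allpairsP => [/stirling_perm_insert_pair [t tQ [A An ->]] | ].
    by exists (t, A); rewrite mem_iota ltnS.
  by move=> [[t A] /= [tQ _ ->]]; exact: insert_pair_stirling.
Qed.

Lemma odd_even_ix_insert_pair n t A : t \in stirling_perms n -> A <= size t ->
  odd_ix n.+1 (insert_pair n t A) = odd_ix n t + ~~ odd A /\
  even_ix n.+1 (insert_pair n t A) = even_ix n t + odd A.
Proof.
move=> tQ At; have nt := stirling_perm_notin tQ.
have same_parity k : k \in iota 1 n ->
    odd (first_pos k (insert_pair n t A)) = odd (first_pos k t).
  rewrite mem_iota /first_pos /= => kn.
  by rewrite -[t in RHS](cat_take_drop A t) odd_index_insert_pair //; lia.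
rewrite /odd_ix /even_ix -[n.+1]addn1 iotaD !count_cat /= add1n !addn0.
rewrite /first_pos index_insert_pair //= negbK.
by split; congr (_ + _); apply: eq_in_count => k /same_parity /= ->.
Qed.

Section LiftPerm.
Variable n : nat.
Local Open Scope group_scope.

Definition lift0_perm (u : 'S_n) : 'S_n.+1 := lift_perm ord0 ord0 u.

Lemma lift0_permX_lift (u : 'S_n) i k :
  (lift0_perm u ^+ i) (lift ord0 k) = lift ord0 ((u ^+ i) k).
Proof.
elim: i => [|i IHi]; first by rewrite !expg0 !perm1.
by rewrite !expgSr !permM IHi lift_perm_lift.
Qed.

Lemma porbit_lift0_perm0 (u : 'S_n) : porbit (lift0_perm u) ord0 = [set ord0].
Proof.
apply/setP => y; rewrite inE; apply/porbitP/eqP => [[i ->]|->].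
  by apply: permX_fix; rewrite lift_perm_id.
by exists 0%N; rewrite expg0 perm1.
Qed.

Lemma porbit_lift0_perm_lift (u : 'S_n) k :
  porbit (lift0_perm u) (lift ord0 k) = lift ord0 @: porbit u k.
Proof.
apply/setP => y; apply/porbitP/imsetP => [[i ->]|[z /porbitP [i ->] ->]].
  by exists ((u ^+ i) k); [exact: mem_porbit | exact: lift0_permX_lift].
by exists i; rewrite lift0_permX_lift.
Qed.

Lemma porbits_lift0_perm (u : 'S_n) :
  porbits (lift0_perm u) =
    [set ord0] |: [set @lift n.+1 ord0 @: A | A : {set 'I_n} in porbits u].
Proof.
apply/setP => A; rewrite !inE; apply/imsetP/orP => [[x _ ->] | [/eqP -> | ]].
- case: (unliftP ord0 x) => [k|] ->; last by left; rewrite porbit_lift0_perm0.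
  by right; rewrite porbit_lift0_perm_lift imset_f ?imset_f.
- by exists ord0; rewrite ?porbit_lift0_perm0.
- case/imsetP => _ /imsetP[k _ ->] ->.
  by exists (lift ord0 k); rewrite ?porbit_lift0_perm_lift.
Qed.

Lemma card_porbits_lift0_perm (u : 'S_n) :
  #|porbits (lift0_perm u)| = #|porbits u|.+1.
Proof.
rewrite porbits_lift0_perm cardsU1 card_imset; last exact/imset_inj/lift_inj.
suff -> : [set ord0] \notin [set @lift n.+1 ord0 @: A | A : {set 'I_n} in porbits u] by [].
apply/imsetP => -[_ /imsetP[k _ ->] /setP/(_ (lift ord0 k))].
by rewrite inE eq_sym (negbTE (neq_lift _ _)) imset_f ?porbit_id.
Qed.

Lemma card_porbits_tperm_lift0_perm (u : 'S_n) j :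
  #|porbits (tperm j ord0 * lift0_perm u)| = #|porbits u| + (j == ord0).
Proof.
have [->|j0] := eqVneq j ord0.
  by rewrite tperm1 mul1g card_porbits_lift0_perm -addn1.
have := porbits_mul_tperm (lift0_perm u) j ord0.
rewrite porbit_lift0_perm0 inE j0 card_porbits_lift0_perm /= addn0 addn1 -addn2.
by move/eqP; rewrite eqn_add2r => /eqP.
Qed.

Lemma card_porbits_le (u : 'S_n) : #|porbits u| <= n.
Proof. by rewrite -[n in _ <= n]card_ord (leq_trans (leq_imset_card _ _)). Qed.

Lemma tperm_lift0_perm_bij :
  bijective (fun uj : 'S_n * 'I_n.+1 => tperm uj.2 ord0 * lift0_perm uj.1).
Proof.
apply: inj_card_bij => [[u1 j1] [u2 j2] /= e|]; last first.
  by rewrite card_prod !card_Sn card_ord factS mulnC.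
have j2_to_0 : lift0_perm u2 (tperm j2 ord0 j1) = ord0.
  by rewrite -permM -e permM tpermL lift_perm_id.
have ej : j1 = j2.
  case: (unliftP ord0 (tperm j2 ord0 j1)) j2_to_0 => [k -> | e0 _].
    by rewrite lift_perm_lift => /eqP; rewrite eq_sym (negbTE (neq_lift _ _)).
  by rewrite -(tpermK j2 ord0 j1) e0 tpermR.
move: e; rewrite ej => /mulgI e; congr pair; apply/permP => k.
by apply: (@lift_inj _ ord0); rewrite -!(lift_perm_lift ord0 ord0) -/(lift0_perm _) e.
Qed.

End LiftPerm.

Local Open Scope ring_scope.

Lemma sum_iota_alternate (R : comNzRingType) (p q : R) n :
  \sum_(A <- iota 0 (n.*2).+1) (if odd A then q else p) = p + n%:R * (p + q).
Proof.
elim: n => [|n IHn]; first by rewrite big_seq1 mul0r addr0.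
rewrite doubleS -addn2 iotaD big_cat IHn big_cons big_seq1 /= odd_double /=.
by rewrite -[n.+1]addn1 natrD; ring.
Qed.

Lemma E0 (R : comNzRingType) (p q : R) : E 0 p q = 1.
Proof. by rewrite /E big_seq1 mulr1. Qed.

Lemma ES (R : comNzRingType) (p q : R) n :
  E n.+1 p q = E n p q * (p + n%:R * (p + q)).
Proof.
rewrite /E (perm_big _ (perm_stirling_perms_insert_pair n)) big_allpairs_dep big_distrl.
apply: eq_big_seq => t tQ; rewrite -sum_iota_alternate big_distrr.
apply: eq_big_seq => A; rewrite mem_iota -(stirling_perm_size tQ) ltnS => /= At.
have [-> ->] := odd_even_ix_insert_pair tQ At.
by case: (odd A); rewrite /= ?addn0 ?addn1 !exprS; ring.
Qed.

Lemma E_prod (R : comNzRingType) (p q : R) n :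
  E n p q = \prod_(i < n) (p + i%:R * (p + q)).
Proof. by elim: n => [|n IHn]; rewrite ?E0 ?big_ord0 // ES IHn big_ord_recr. Qed.

Definition cycle_gf (R : comNzRingType) n (x y : R) : R :=
  \sum_(u : 'S_n) x ^+ #|porbits u| * y ^+ (n - #|porbits u|).

Lemma cycle_gfS (R : comNzRingType) n (x y : R) :
  cycle_gf n.+1 x y = cycle_gf n x y * (x + n%:R * y).
Proof.
rewrite /cycle_gf (reindex _ (onW_bij _ (tperm_lift0_perm_bij n))) /=.
rewrite -(pair_bigA _ (fun u j => x ^+ #|porbits (tperm j ord0 * lift0_perm u)| *
  y ^+ (n.+1 - #|porbits (tperm j ord0 * lift0_perm u)|))) big_distrl /=.
apply: eq_bigr => u _; have le_un := card_porbits_le u.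
rewrite big_ord_recl /= card_porbits_tperm_lift0_perm eqxx addn1 subSS.
under eq_bigr do
  rewrite card_porbits_tperm_lift0_perm eq_sym (negbTE (neq_lift _ _)) addn0 subSn //.
rewrite sumr_const card_ord !exprS -mulr_natl.
by move: (x ^+ _) (y ^+ _) => X Y; ring.
Qed.

Lemma cycle_gf_prod (R : comNzRingType) n (x y : R) :
  cycle_gf n x y = \prod_(i < n) (x + i%:R * y).
Proof.
elim: n => [|n IHn]; last by rewrite cycle_gfS IHn big_ord_recr.
rewrite /cycle_gf big_ord0 (big_pred1 1%g) => [|u]; last by rewrite !inE permS0 eqxx.
have /eqP -> : #|porbits (1%g : 'S_0)| == 0%N by rewrite -leqn0 card_porbits_le.
by rewrite mulr1.
Qed.

Lemma stirling1_sumE (R : comNzRingType) n (x y : R) :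
  \sum_(0 <= k < n.+1) (stirling1 n k)%:R * x ^+ k * y ^+ (n - k) = cycle_gf n x y.
Proof.
rewrite big_mkord /cycle_gf.
pose cycles (u : 'S_n) : 'I_n.+1 :=
  Ordinal (card_porbits_le u : #|porbits u| < n.+1)%N.
rewrite (partition_big cycles xpredT) //=; apply: eq_bigr => k _.
rewrite (eq_bigr (fun=> x ^+ k * y ^+ (n - k))) => [|u /eqP <-] //.
rewrite sumr_const -mulrA mulr_natl /stirling1; congr (_ *+ _).
by apply: eq_card => u; rewrite inE.
Qed.

Theorem theorem4 :
  (forall (R : comNzRingType) (n : nat) (p q : R), (1 <= n)%N ->
     E n p q = \sum_(0 <= k < n.+1) (stirling1 n k)%:R * p ^+ k * (p + q) ^+ (n - k))
  /\
  (forall (R : comNzRingType) (n : nat), (2 <= n)%N ->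
     [/\ E n (1 : R) 1 = (odd_dfact n)%:R,
         forall p : R, E n p 0 = (n`!)%:R * p ^+ n,
         E n (1 : R) (-1) = 1
       & E n (-1 : R) 1 = (-1) ^+ n]).
Proof.
split=> [R n p q _ | R n _]; first by rewrite E_prod stirling1_sumE cycle_gf_prod.
split; rewrite ?E_prod.
- by rewrite /odd_dfact natr_prod; apply: eq_bigr => i _; ring.
- move=> p; rewrite E_prod (eq_bigr (fun i : 'I_n => i.+1%:R * p)) => [|i _]; last first.
    by rewrite addr0 -addn1 natrD; ring.
  by rewrite prodrMr card_ord fact_prod big_add1 big_mkord natr_prod.
- by rewrite big1 // => i _; rewrite subrr mulr0 addr0.
- rewrite -[n in RHS]card_ord -prodr_const.
  by apply: eq_bigr => i _; rewrite addNr mulr0 addr0.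
Qed.
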